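(* If $G$ is a connected $P_4$-free graph and $G\neq K_2$, then $\gamma(G)=\gamma_{\rm cer}(G)$.
   Context: All graphs are finite and simple. A graph is $P_4$-free if it has no induced subgraph isomorphic to the path $P_4$ on four vertices. A set $D\subseteq V_G$ is a dominating set of $G$ if every vertex of $V_G-D$ has a neighbor in $D$; $\gamma(G)$ is the minimum cardinality of a dominating set. A set $D\subseteq V_G$ is a certified dominating set of $G$ if $D$ is a dominating set of $G$ and every vertex of $D$ has either zero or at least two neighbors in $V_G-D$; $\gamma_{\rm cer}(G)$ is the minimum cardinality of a certified dominating set of $G$. *)

From mathcomp Require Import all_boot.
Set Implicit Arguments. Unset Strict Implicit. Unset Printing Implicit Defensive.

Definition simple_graph (T : finType) (e : rel T) : Prop :=
  symmetric e /\ irreflexive e.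

Definition connected_graph (T : finType) (e : rel T) : Prop :=
  forall x y : T, connect e x y.

(* Induced P4: a-b-c-d path, with no chords ac, bd, ad (distinctness follows
   from irreflexivity but is stated explicitly). *)
Definition P4_free (T : finType) (e : rel T) : Prop :=
  ~ exists a b c d : T,
      [/\ uniq [:: a; b; c; d],
          [&& e a b, e b c & e c d] &
          [&& ~~ e a c, ~~ e b d & ~~ e a d]].

Definition is_K2 (T : finType) (e : rel T) : Prop :=
  #|T| = 2 /\ forall x y : T, x != y -> e x y.

Definition dominating (T : finType) (e : rel T) (D : {set T}) : bool :=
  [forall v, (v \notin D) ==> [exists u in D, e v u]].

Definition ext_deg (T : finType) (e : rel T) (D : {set T}) (v : T) : nat :=
  #|[set u | (u \notin D) && e v u]|.

Definition certified_dominating (T : finType) (e : rel T) (D : {set T}) : bool :=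
  dominating e D &&
  [forall v in D, (ext_deg e D v == 0) || (2 <= ext_deg e D v)].

(* minimum cardinalities; V(G) itself is (certified) dominating, so #|T| is a valid default *)
Definition gamma (T : finType) (e : rel T) : nat :=
  \big[minn/#|T|]_(D : {set T} | dominating e D) #|D|.

Definition gamma_cer (T : finType) (e : rel T) : nat :=
  \big[minn/#|T|]_(D : {set T} | certified_dominating e D) #|D|.

From mathcomp Require Import all_boot zify.

(* Every certified dominating set dominates, so gamma <= gamma_cer.  A
   connected P4-free graph has diameter at most 2.  If some vertex u is
   adjacent to all others, then {u} is certified unless the graph is K_2, so
   both parameters equal 1.  Otherwise no single vertex dominates, so
   gamma >= 2, and we exhibit a certified dominating pair: let v have maximum
   degree, let m be a non-neighbour of v sharing as few neighbours with v as
   possible, and let w be a common neighbour of v and m.  P4-freeness and the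
   minimality of m force w to be adjacent to every non-neighbour of v, so
   {v, w} dominates.  If deg w >= 3 then {v, w} is certified; otherwise
   N(w) = {v, m} and {v, m} is a certified dominating set, both of its
   vertices being adjacent to w and to a second neighbour w' of v. *)

Set Implicit Arguments.
Unset Strict Implicit.
Unset Printing Implicit Defensive.

Section BigMin.
Variables (I : finType) (P : pred I) (f : I -> nat) (n : nat).

Lemma bigmin_le i : P i -> \big[minn/n]_(j | P j) f j <= f i.
Proof.
move=> Pi; have : i \in index_enum I by rewrite mem_index_enum.
elim: (index_enum I) => //= j s IHs; rewrite inE big_cons => /predU1P [<- | si].
  by rewrite Pi geq_minl.
by case: (P j); [apply: leq_trans (geq_minr _ _) (IHs si) | apply: IHs].
Qed.

Lemma le_bigmin k :
  k <= n -> (forall i, P i -> k <= f i) -> k <= \big[minn/n]_(j | P j) f j.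
Proof.
move=> kn kf; elim/big_ind: _ => // x y kx ky.
by rewrite leq_min kx ky.
Qed.

End BigMin.

Section DominationNumbers.
Variables (T : finType) (e : rel T).

Lemma dominating_setT : dominating e [set: T].
Proof. by apply/forallP => x; rewrite in_setT. Qed.

Lemma certified_dominating_setT : certified_dominating e [set: T].
Proof.
rewrite /certified_dominating dominating_setT; apply/forallP => x.
apply/implyP => _; apply/orP; left.
by rewrite /ext_deg cards_eq0; apply/eqP/setP => y; rewrite !inE.
Qed.

Lemma certified_dominating_ext_gt1 D :
  dominating e D -> {in D, forall z, 1 < ext_deg e D z} ->
  certified_dominating e D.
Proof.
move=> domD extD; rewrite /certified_dominating domD.
by apply/forallP => z; apply/implyP => /extD ->; rewrite orbT.
Qed.

Lemma gamma_le D : dominating e D -> gamma e <= #|D|.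
Proof. exact: bigmin_le. Qed.

Lemma gamma_cer_le D : certified_dominating e D -> gamma_cer e <= #|D|.
Proof. exact: bigmin_le. Qed.

Lemma gamma_cer_le_card : gamma_cer e <= #|T|.
Proof. by rewrite -cardsT gamma_cer_le ?certified_dominating_setT. Qed.

Lemma gamma_ge k : (forall D, dominating e D -> k <= #|D|) -> k <= gamma e.
Proof.
by move=> k_dom; apply: le_bigmin => //; rewrite -cardsT k_dom ?dominating_setT.
Qed.

Lemma gamma_le_gamma_cer : gamma e <= gamma_cer e.
Proof.
apply: le_bigmin => [|D /andP [domD _]]; last exact: gamma_le.
by rewrite -cardsT; apply: gamma_le; exact: dominating_setT.
Qed.

End DominationNumbers.

Section SimpleGraphs.
Variables (T : finType) (e : rel T).
Hypotheses (e_sym : symmetric e) (e_irr : irreflexive e).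

Definition nbhd x := [set y | e x y].
Definition non_nbhd v := [set x | (x != v) && ~~ e v x].
Definition universal u := [forall y, (y != u) ==> e u y].

Lemma adj_neq x y : e x y -> x != y.
Proof. by apply: contraTneq => ->; rewrite e_irr. Qed.

Lemma ext_degE (D : {set T}) x : ext_deg e D x = #|nbhd x :\: D|.
Proof. by apply: eq_card => y; rewrite !inE andbC. Qed.

Lemma ext_deg_gt1 (D : {set T}) z :
  z \in D -> #|D| <= 2 -> 2 < #|nbhd z| -> 1 < ext_deg e D z.
Proof.
move=> zD D2 z3; rewrite ext_degE.
have : #|nbhd z :&: D| <= #|D :\ z|.
  apply/subset_leq_card/subsetP => y; rewrite !inE => /andP [ezy ->].
  by rewrite andbT eq_sym adj_neq.
move: (cardsID D (nbhd z)) (cardsD1 z D); rewrite zD; lia.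
Qed.

Lemma universal_certified u :
  universal u -> #|T| != 2 -> certified_dominating e [set u].
Proof.
move=> /forallP univ T2; apply/andP; split.
  apply/forallP => y; apply/implyP; rewrite inE => yu.
  by apply/existsP; exists u; rewrite inE eqxx e_sym (implyP (univ y)).
apply/forallP => z; apply/implyP; rewrite inE => /eqP ->.
have -> : ext_deg e [set u] u = #|T|.-1.
  rewrite -(cardsC1 u); apply: eq_card => y; rewrite !inE.
  by case: eqVneq => //= yu; rewrite (implyP (univ y)).
by move: T2; case: #|T| => [|[|[|]]].
Qed.

Lemma universal_K2 u : universal u -> #|T| = 2 -> is_K2 e.
Proof.
move=> /forallP univ T2; split => // x y.
have [->|xu] := eqVneq x u; first by rewrite eq_sym => /(implyP (univ y)).
have [->|yu xy] := eqVneq y u; first by rewrite e_sym => /(implyP (univ x)).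
have : 1 < #|[set~ u]| by apply/card_gt1P; exists x, y; rewrite !inE.
by rewrite cardsC1 T2.
Qed.

Lemma card_dominating_gt0 (x0 : T) (D : {set T}) : dominating e D -> 0 < #|D|.
Proof.
move=> /forallP /(_ x0) domx0; apply/card_gt0P.
case: (boolP (x0 \in D)) => [|x0D]; first by exists x0.
by move: domx0; rewrite x0D => /existsP [z /andP [zD _]]; exists z.
Qed.

Lemma card_dominating_gt1 (x0 : T) (D : {set T}) :
  (forall u, ~~ universal u) -> dominating e D -> 1 < #|D|.
Proof.
move=> nuniv domD; have /card_gt0P [z zD] := card_dominating_gt0 x0 domD.
have /forallPn [y] := nuniv z; rewrite negb_imply => /andP [yz nzy].
apply/card_gt1P; case: (boolP (y \in D)) => [yD|yD]; first by exists y, z.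
move/forallP/(_ y): domD; rewrite yD => /existsP [u /andP [uD eyu]].
by exists u, z; split=> //; apply: contraNneq nzy => <-; rewrite e_sym.
Qed.

Lemma dominating_hub_pair v w :
  e v w -> {in non_nbhd v, forall x, e w x} -> dominating e [set v; w].
Proof.
move=> evw hub; apply/forallP => y; apply/implyP.
rewrite !inE negb_or => /andP [yv yw]; apply/existsP.
have [evy | nvy] := boolP (e v y); first by exists v; rewrite !inE eqxx e_sym.
by exists w; rewrite !inE eqxx orbT e_sym hub // inE yv.
Qed.

Lemma certified_hub_pair v w :
  e v w -> {in non_nbhd v, forall x, e w x} -> 2 < #|nbhd w| <= #|nbhd v| ->
  certified_dominating e [set v; w].
Proof.
move=> evw hub /andP [w3 wv].
apply: certified_dominating_ext_gt1 => [|z zD].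
  exact: dominating_hub_pair.
apply: ext_deg_gt1 => //; first by rewrite cards2 ltnS leq_b1.
by move: zD; rewrite !inE => /pred2P [] ->; rewrite ?(leq_trans w3).
Qed.

End SimpleGraphs.

Section P4FreeGraphs.
Variables (T : finType) (e : rel T).
Hypotheses (e_sym : symmetric e) (e_irr : irreflexive e) (e_P4 : P4_free e).

Lemma no_induced_P4 a b c d :
  e a b -> e b c -> e c d -> ~~ e a c -> ~~ e b d -> ~~ e a d -> False.
Proof.
move=> ab bc cd nac nbd nad; apply: e_P4; exists a, b, c, d.
split; [|by rewrite ab bc cd|by rewrite nac nbd nad].
have ac : a != c by apply: contraNneq nad => ->.
have ad : a != d by apply: contraNneq nac => ->; rewrite e_sym.
have bd : b != d by apply: contraNneq nad => <-.
by rewrite /= !inE !negb_or ac ad bd !(adj_neq e_irr) ?ab ?bc ?cd.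
Qed.

Lemma common_nbhd_subset v w m x :
  m \in non_nbhd e v -> x \in non_nbhd e v -> e v w -> e w m -> ~~ e w x ->
  nbhd e x :&: nbhd e v \subset nbhd e m :&: nbhd e v.
Proof.
rewrite !inE => /andP [_ nvm] /andP [_ nvx] evw ewm nwx.
apply/subsetP => y; rewrite !inE => /andP [exy evy]; rewrite evy andbT.
apply/negPn/negP => nmy.
have [exm | nxm] := boolP (e x m).
  by apply: (@no_induced_P4 x m w v); rewrite // e_sym.
have [ewy | nwy] := boolP (e w y).
  by apply: (@no_induced_P4 m w y x); rewrite // e_sym.
by apply: (@no_induced_P4 m w v y); rewrite // e_sym.
Qed.

Lemma hub_adj_non_nbhd v w m :
  m \in non_nbhd e v ->
  (forall x, x \in non_nbhd e v ->
     #|nbhd e m :&: nbhd e v| <= #|nbhd e x :&: nbhd e v|) ->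
  e v w -> e w m -> {in non_nbhd e v, forall x, e w x}.
Proof.
move=> mN mmin evw ewm x xN; apply/negPn/negP => nwx.
have : nbhd e x :&: nbhd e v \proper nbhd e m :&: nbhd e v.
  rewrite properE (common_nbhd_subset mN xN evw ewm nwx) /=.
  apply/subsetPn; exists w.
    by rewrite !inE e_sym ewm evw.
  by rewrite !inE e_sym (negbTE nwx).
by move/proper_card; rewrite ltnNge mmin.
Qed.

Lemma certified_leaf_pair v w m :
  m \in non_nbhd e v -> {in non_nbhd e v, forall x, e w x} -> e v w ->
  nbhd e w = [set v; m] -> 1 < #|nbhd e v| -> certified_dominating e [set v; m].
Proof.
rewrite inE => /andP [mv nvm] hub evw Nw Nv2.
have /card_gt0P [w' w'N] : 0 < #|nbhd e v :\ w|.
  by move: Nv2; rewrite (cardsD1 w) inE evw.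
move: w'N; rewrite !inE => /andP [w'w evw'].
have ewm : e w m by move: (set22 v m); rewrite -Nw inE.
have notD x : e v x -> x \notin [set v; m].
  move=> evx; rewrite !inE negb_or eq_sym (adj_neq e_irr evx).
  by apply: contraNneq nvm => <-.
have emw' : e m w'.
  apply/negPn/negP => nmw'.
  have nww' : ~~ e w w' by move: (notD w' evw'); rewrite -Nw inE.
  by apply: (@no_induced_P4 m w v w'); rewrite // e_sym.
have [wD w'D] := (notD w evw, notD w' evw').
apply: certified_dominating_ext_gt1 => [|z zD].
  apply/forallP => y; apply/implyP => yD; apply/existsP.
  have [evy | nvy] := boolP (e v y); first by exists v; rewrite !inE eqxx e_sym.
  have yv : y != v by apply: contraNneq yD => ->; apply: set21.
  have : y \in nbhd e w by rewrite inE hub // inE yv.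
  by rewrite Nw (negbTE yD).
rewrite ext_degE; apply/card_gt1P; exists w, w'.
rewrite !in_setD wD w'D eq_sym w'w !inE.
by case/set2P: zD => ->; rewrite ?(e_sym m w) ?evw ?evw' ?ewm ?emw'.
Qed.

Hypothesis e_conn : connected_graph e.

Lemma common_neighbour v m : m != v -> ~~ e v m -> exists2 w, e v w & e w m.
Proof.
move=> mv nvm.
(* the ball of radius 2 around v; P4-freeness makes it closed under adjacency *)
pose S := [pred x | [|| x == v, e v x | [exists w, e v w && e w x]]].
have S_fwd x y : e x y -> x \in S -> y \in S.
  move=> exy; rewrite !inE; have [//|yv] := eqVneq y v.
  have [//|nvy] := boolP (e v y); rewrite /=.
  have [evx _ | nvx] := boolP (e v x).
    by apply/existsP; exists x; rewrite evx.
  case/or3P => [/eqP xv | // | /existsP [w /andP [evw ewx]]].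
    by rewrite -xv exy in nvy.
  apply/existsP; exists w; rewrite evw /=; apply/negPn/negP => nwy.
  by apply: (@no_induced_P4 y x w v); rewrite // e_sym.
have S_closed : closed e S.
  by move=> x y exy; apply/idP/idP; apply: S_fwd; rewrite // e_sym.
have := closed_connect S_closed (e_conn v m).
rewrite !inE eqxx (negbTE mv) (negbTE nvm) /= => /esym /existsP [w].
by case/andP; exists w.
Qed.

Lemma certified_pair_exists (x0 : T) :
  (forall u, ~~ universal e u) ->
  exists2 D : {set T}, certified_dominating e D & #|D| <= 2.
Proof.
move=> nuniv.
have [v _ vmax] := @arg_maxnP T x0 xpredT (fun x => #|nbhd e x|) isT.
have [m0 m0N] : exists m0, m0 \in non_nbhd e v.
  have /forallPn [y] := nuniv v; rewrite negb_imply => yv.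
  by exists y; rewrite inE.
have [m mN mmin] := @arg_minnP T m0 (fun x => x \in non_nbhd e v)
  (fun x => #|nbhd e x :&: nbhd e v|) m0N.
have := mN; rewrite inE => /andP [mv nvm].
have [w evw ewm] := common_neighbour mv nvm.
have hub := hub_adj_non_nbhd mN mmin evw ewm.
have [w3 | w2] := ltnP 2 #|nbhd e w|.
  exists [set v; w]; last by rewrite cards2 ltnS leq_b1.
  by apply: certified_hub_pair; rewrite // w3; apply: vmax.
exists [set v; m]; last by rewrite cards2 ltnS leq_b1.
have Nw : nbhd e w = [set v; m].
  apply/esym/eqP; rewrite eqEcard cards2 (eq_sym v) mv w2 andbT.
  by apply/subsetP => y; rewrite !inE => /pred2P [] ->; rewrite ?ewm // e_sym.
apply: (certified_leaf_pair mN hub evw Nw).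
by rewrite (leq_trans _ (vmax w isT)) // Nw cards2 (eq_sym v) mv.
Qed.

End P4FreeGraphs.

Theorem theorem2p7 (T : finType) (e : rel T) :
  simple_graph e -> connected_graph e -> P4_free e -> ~ is_K2 e ->
  gamma e = gamma_cer e.
Proof.
move=> [e_sym e_irr] e_conn e_P4 notK2.
apply/eqP; rewrite eqn_leq gamma_le_gamma_cer /=.
have [x0 _ | T0] := pickP (@predT T); last first.
  by rewrite (leq_trans (gamma_cer_le_card e)) // (eq_card0 T0).
have [/existsP [u univ] | /existsPn nuniv] := boolP [exists u, universal e u].
  have T2 : #|T| != 2 by apply/eqP => /(universal_K2 e_sym univ).
  have cer_u := universal_certified e_sym univ T2.
  apply: leq_trans (gamma_cer_le cer_u) _; rewrite cards1.
  by apply: gamma_ge => D; apply: card_dominating_gt0.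
have [D cerD D2] := certified_pair_exists e_sym e_irr e_P4 e_conn x0 nuniv.
apply: leq_trans (gamma_cer_le cerD) (leq_trans D2 _).
by apply: gamma_ge => D'; apply: card_dominating_gt1 nuniv.
Qed.
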